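(* If $\mu_0<\mu<1$ and $v\in\mathcal{K}\setminus\mathcal{Y}_\mu$, then $C_v^+\cap\mathcal{K}\subset\mathcal{K}\setminus\mathcal{Y}_\mu$.
   Context: $\mathcal{K}\subset\mathbb{R}^q$ is an open, bounded, convex set with $0\in\mathcal{K}$. Let $g:\mathbb{S}^{q-1}\to(0,\infty)$ be the Lipschitz function such that $\nu\mapsto g(\nu)\nu$ parametrizes $\partial\mathcal{K}$, and $m_2=\sup g$. Define $G:\overline{B_1(0)}\to\overline{\mathcal{K}}$ by $G(x)=g(x/|x|)x$ for $x\ne0$, $G(0)=0$, and for $0<\mu<1$ let $\mathcal{Y}_\mu=G(B_\mu(0))$ (open convex sets increasing to $\mathcal{K}$). Fix $r_0>0$ and $0<\mu_0<1$ with $\overline{B_{r_0}(0)}\subset\mathcal{Y}_{\mu_0}$. Cones: for $v\in\mathcal{K}\setminus\overline{B_{r_0}(0)}$, $C_v^-$ is the closed (solid) half-cone with vertex $v$, axis the ray from $v$ through $0$, and half-aperture $\alpha=\alpha(v)\in(0,\pi/2)$ given by $\sin\alpha=r_0/|v|$; $C_v^+=\{v+\xi:\xi\in\mathbb{R}^q,\ v-\xi\in C_v^-\}$ is its reflection through $v$. (Note that $v\in\mathcal{K}\setminus\mathcal{Y}_\mu$ with $\mu>\mu_0$ implies $v\notin\overline{B_{r_0}(0)}$, so $C_v^+$ is defined.) *)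

From mathcomp Require Import all_boot all_order all_algebra.
From mathcomp Require Import all_classical all_reals all_analysis.
Set Implicit Arguments. Unset Strict Implicit. Unset Printing Implicit Defensive.
Import Order.TTheory GRing.Theory Num.Theory.
Local Open Scope ring_scope.
Local Open Scope classical_set_scope.

Section Defs.
Context {R : realType} {q : nat}.
Notation V := 'rV[R]_q.

Definition dot (u w : V) : R := \sum_(i < q) u 0 i * w 0 i.
Definition enorm (u : V) : R := Num.sqrt (dot u u).

Definition eopen (K : set V) : Prop :=
  forall x, K x -> exists2 e : R, 0 < e & forall y, enorm (y - x) < e -> K y.
Definition ebounded (K : set V) : Prop :=
  exists M : R, forall x, K x -> enorm x <= M.
Definition econvex (K : set V) : Prop :=
  forall x y (t : R), K x -> K y -> 0 <= t -> t <= 1 -> K (t *: x + (1 - t) *: y).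
Definition eclosure (K : set V) : set V :=
  [set x | forall e : R, 0 < e -> exists2 y, K y & enorm (y - x) < e].
Definition einterior (K : set V) : set V :=
  [set x | exists2 e : R, 0 < e & forall y, enorm (y - x) < e -> K y].
Definition eboundary (K : set V) : set V := eclosure K `\` einterior K.

Definition sphere : set V := [set x | enorm x = 1].
Definition oball0 (r : R) : set V := [set x | enorm x < r].
Definition cball0 (r : R) : set V := [set x | enorm x <= r].

Definition Gmap (g : V -> R) (x : V) : V :=
  if x == 0 then 0 else g ((enorm x)^-1 *: x) *: x.
Definition Ymu (g : V -> R) (mu : R) : set V := Gmap g @` oball0 mu.

Definition alpha (r0 : R) (v : V) : R := asin (r0 / enorm v).

(* C_v^- : closed solid half-cone, vertex v, axis the ray from v through 0,
   half-aperture alpha(v): w = v or the angle between w - v and -v is <= alpha *)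
Definition cone_minus (r0 : R) (v : V) : set V :=
  [set w | enorm (w - v) * enorm v * cos (alpha r0 v) <= dot (w - v) (- v)].

Definition cone_plus (r0 : R) (v : V) : set V :=
  [set w | exists xi : V, w = v + xi /\ cone_minus r0 v (v - xi)].
End Defs.

From mathcomp Require Import all_boot all_order all_algebra.
From mathcomp Require Import all_classical all_reals all_analysis.
From mathcomp Require Import ring lra.
Import Order.TTheory GRing.Theory Num.Theory.
Local Open Scope ring_scope.
Local Open Scope classical_set_scope.

(* Since K is convex, contains 0 and is star-shaped with radial function g,
   Y_mu is exactly the dilate mu K, hence convex, and Y_mu0 sits inside Y_mu.
   For w = v + xi in C_v^+, the point b = v - t xi on the line through v and w
   closest to 0 has |b| <= r0, because the cone has half-aperture alpha with
   sin alpha = r0/|v|; so b lies in Y_mu0.  As v is a convex combination of w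
   and b, w in Y_mu would force v in Y_mu. *)

Section Euclidean.
Context {R : realType} {q : nat}.
Implicit Types (u w z v xi : 'rV[R]_q) (a b c : R).

Lemma dotC u w : dot u w = dot w u.
Proof. by apply: eq_bigr => i _; rewrite mulrC. Qed.

Lemma dotDl u w z : dot (u + w) z = dot u z + dot w z.
Proof. by rewrite /dot -big_split; apply: eq_bigr => i _; rewrite mxE mulrDl. Qed.

Lemma dotZl a u w : dot (a *: u) w = a * dot u w.
Proof. by rewrite /dot mulr_sumr; apply: eq_bigr => i _; rewrite mxE mulrA. Qed.

Lemma dotNl u w : dot (- u) w = - dot u w.
Proof. by rewrite -scaleN1r dotZl mulN1r. Qed.

Lemma dotBl u w z : dot (u - w) z = dot u z - dot w z.
Proof. by rewrite dotDl dotNl. Qed.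

Lemma dotZr a u w : dot w (a *: u) = a * dot w u.
Proof. by rewrite dotC dotZl dotC. Qed.

Lemma dotNr u w : dot w (- u) = - dot w u.
Proof. by rewrite dotC dotNl dotC. Qed.

Lemma dotBr u w z : dot z (u - w) = dot z u - dot z w.
Proof. by rewrite dotC dotBl !(dotC z). Qed.

Lemma dot_ge0 u : 0 <= dot u u.
Proof. by apply: sumr_ge0 => i _; rewrite -expr2 sqr_ge0. Qed.

Lemma dot_eq0 u : (dot u u == 0) = (u == 0).
Proof.
apply/idP/eqP => [|->]; last by rewrite -(scale0r 0) dotZl mul0r.
rewrite psumr_eq0 => [/allP u0|i _]; last by rewrite -expr2 sqr_ge0.
by apply/rowP => i; rewrite mxE; have /= := u0 i (mem_index_enum _);
  rewrite -expr2 sqrf_eq0 => /eqP.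
Qed.

Lemma enorm_ge0 u : 0 <= enorm u.
Proof. exact: sqrtr_ge0. Qed.

Lemma enorm_sqr u : enorm u ^+ 2 = dot u u.
Proof. by rewrite sqr_sqrtr // dot_ge0. Qed.

Lemma enorm_eq0 u : (enorm u == 0) = (u == 0).
Proof. by rewrite -dot_eq0 -enorm_sqr sqrf_eq0. Qed.

Lemma enorm0 : enorm (0 : 'rV[R]_q) = 0.
Proof. by apply/eqP; rewrite enorm_eq0. Qed.

Lemma enorm_gt0 u : (0 < enorm u) = (u != 0).
Proof. by rewrite lt_neqAle enorm_ge0 andbT eq_sym enorm_eq0. Qed.

Lemma enormZ a u : enorm (a *: u) = `|a| * enorm u.
Proof. by rewrite /enorm dotZl dotZr mulrA -expr2 sqrtrM ?sqr_ge0 // sqrtr_sqr. Qed.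

Lemma enormN u : enorm (- u) = enorm u.
Proof. by rewrite -scaleN1r enormZ normrN normr1 mul1r. Qed.

Lemma enormB u w : enorm (u - w) = enorm (w - u).
Proof. by rewrite -enormN opprB. Qed.

Lemma polar_decomp {u} : u != 0 ->
  exists2 nu, enorm nu = 1 & u = enorm u *: nu.
Proof.
rewrite -enorm_gt0 => u_gt0; exists ((enorm u)^-1 *: u).
  by rewrite enormZ gtr0_norm ?invr_gt0 // mulVf ?gt_eqF.
by rewrite scalerA mulfV ?scale1r ?gt_eqF.
Qed.

Lemma unit_scale_inj {a b u w} : 0 < a -> 0 < b -> enorm u = 1 -> enorm w = 1 ->
  a *: u = b *: w -> a = b /\ u = w.
Proof.
move=> a_gt0 b_gt0 u1 w1 E.
have ab : a = b.
  by have := congr1 enorm E; rewrite !enormZ u1 w1 !mulr1 !gtr0_norm.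
split=> //; have := congr1 (fun z => a^-1 *: z) E.
by rewrite -ab !scalerA mulVf ?gt_eqF // !scale1r.
Qed.

(* The foot of the perpendicular from 0 to the line through v with direction
   xi; the angle condition bounds its distance to 0 by |v| sin(angle). *)
Lemma enorm_proj_le {v xi c} : xi != 0 -> 0 <= c ->
  enorm xi * enorm v * c <= dot v xi ->
  enorm (v - (dot v xi / dot xi xi) *: xi) ^+ 2 <= enorm v ^+ 2 * (1 - c ^+ 2).
Proof.
move=> xi0 c0 hc.
have d_gt0 : 0 < dot xi xi by rewrite -enorm_sqr exprn_gt0 ?enorm_gt0.
have p_ge0 : 0 <= dot v xi by apply: le_trans hc; rewrite !mulr_ge0 ?enorm_ge0.
have := lerXn2r 2 _ _ hc; rewrite !nnegrE !mulr_ge0 ?enorm_ge0 // => /(_ isT p_ge0).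
rewrite !exprMn !enorm_sqr dotBl !dotBr !dotZl !dotZr (dotC xi v).
set p := dot v xi; set d := dot xi xi; set n := dot v v => hp.
have -> : n - p / d * p - (p / d * p - p / d * (p / d * d)) = n - p ^+ 2 / d.
  by field; rewrite gt_eqF.
suff : n * c ^+ 2 <= p ^+ 2 / d by lra.
by rewrite ler_pdivlMr // mulrC mulrA.
Qed.

End Euclidean.

Lemma cone_plus_foot {R : realType} {q : nat} {r0 : R} {v w : 'rV[R]_q} :
  0 < r0 -> r0 < enorm v -> w != v -> cone_plus r0 v w ->
  exists2 t, 0 <= t & enorm (v - t *: (w - v)) <= r0.
Proof.
move=> r0_gt0 r0_v wv [xi [wE Cxi]].
have v_gt0 : 0 < enorm v by apply: lt_trans r0_v.
have xi0 : xi != 0 by apply: contraNneq wv => xi0; rewrite wE xi0 addr0.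
have [sin_ge0 sin_le1] : 0 <= r0 / enorm v /\ r0 / enorm v <= 1.
  by split; [rewrite divr_ge0 ?enorm_ge0 ?ltW | rewrite ler_pdivrMr // mul1r ltW].
have cosE : cos (alpha r0 v) = Num.sqrt (1 - (r0 / enorm v) ^+ 2).
  by rewrite cos_asin // (le_trans _ sin_ge0) ?lerN10.
have cos2 : cos (alpha r0 v) ^+ 2 = 1 - (r0 / enorm v) ^+ 2.
  by rewrite cosE sqr_sqrtr // subr_ge0 exprn_ile1.
have Cxi' : enorm xi * enorm v * cos (alpha r0 v) <= dot v xi.
  move: Cxi; rewrite /cone_minus /= addrAC subrr add0r enormN.
  by rewrite dotNl dotNr opprK dotC.
have p_ge0 : 0 <= dot v xi.
  by apply: le_trans Cxi'; rewrite !mulr_ge0 ?enorm_ge0 // cosE sqrtr_ge0.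
exists (dot v xi / dot xi xi); first by rewrite divr_ge0 ?dot_ge0.
rewrite wE addrAC subrr add0r -(ler_pXn2r (isT : (0 < 2)%N)) ?nnegrE;
  rewrite ?enorm_ge0 ?(ltW r0_gt0) //.
apply: le_trans (enorm_proj_le xi0 _ Cxi') _; first by rewrite cosE sqrtr_ge0.
by rewrite cos2 le_eqVlt; apply/orP; left; apply/eqP; field; rewrite gt_eqF.
Qed.

Lemma Ymu_mono {R : realType} {q : nat} (g : 'rV[R]_q -> R) {m1 m2 : R} :
  m1 <= m2 -> Ymu g m1 `<=` Ymu g m2.
Proof. by move=> m12 _ [x xm <-]; exists x => //; apply: lt_le_trans m12. Qed.

Lemma Gmap_polar {R : realType} {q : nat} (g : 'rV[R]_q -> R) s nu :
  0 < s -> enorm nu = 1 -> Gmap g (s *: nu) = (g nu * s) *: nu.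
Proof.
move=> s_gt0 nu1; have snu0 : s *: nu != 0.
  by rewrite -enorm_gt0 enormZ nu1 mulr1 normr_gt0 gt_eqF.
rewrite /Gmap (negbTE snu0) enormZ nu1 mulr1 gtr0_norm // [in g _]scalerA.
by rewrite mulVf ?gt_eqF // scale1r scalerA.
Qed.

Section StarShaped.
Context {R : realType} {q : nat} {K : set 'rV[R]_q} {g : 'rV[R]_q -> R}.
Hypotheses (K_open : eopen K) (K_bounded : ebounded K) (K_convex : econvex K)
  (K0 : K 0) (g_gt0 : forall nu, sphere nu -> 0 < g nu)
  (K_boundary : forall x, eboundary K x <-> exists2 nu, sphere nu & x = g nu *: nu).

Lemma econvex_closure_segment {a b} {t : R} : K b -> eclosure K a ->
  0 <= t -> t < 1 -> K (t *: a + (1 - t) *: b).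
Proof.
move=> Kb Ka t_ge0 t_lt1.
have [->|t_neq0] := eqVneq t 0; first by rewrite scale0r add0r subr0 scale1r.
have t_gt0 : 0 < t by rewrite lt_neqAle eq_sym t_neq0.
have t1_gt0 : 0 < 1 - t by rewrite subr_gt0.
have [e e_gt0 ball_b] := K_open _ Kb.
have [y Ky ya] := Ka _ (divr_gt0 (mulr_gt0 e_gt0 t1_gt0) t_gt0).
pose c := t / (1 - t).
(* b + c (a - y) stays in the ball around b, and the target point is the
   convex combination of y and b + c (a - y) with weights t, 1 - t *)
have Kb' : K (b + c *: (a - y)).
  apply: ball_b; rewrite (addrC b) addrK enormZ gtr0_norm ?divr_gt0 // enormB.
  by rewrite /c -ltr_pdivlMl ?divr_gt0 // invf_div mulrC mulrA.
have := K_convex _ _ _ Ky Kb' t_ge0 (ltW t_lt1).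
congr K; rewrite scalerDr scalerA /c mulrC divfK ?gt_eqF // scalerBr.
by rewrite addrCA [t *: y + _]addrC subrK addrC.
Qed.

Lemma Ymu_scale_K (m : R) w : 0 < m -> Ymu g m w -> K (m^-1 *: w).
Proof.
move=> m_gt0 [x xm <-].
have [->|x0] := eqVneq x 0; first by rewrite /Gmap eqxx scaler0.
have [nu nu1 xE] := polar_decomp x0; have x_gt0 : 0 < enorm x by rewrite enorm_gt0.
have Kgnu : eclosure K (g nu *: nu).
  by have [] := (K_boundary _).2 (ex_intro2 _ _ nu nu1 erefl).
have := econvex_closure_segment K0 Kgnu (divr_ge0 (enorm_ge0 x) (ltW m_gt0)).
rewrite ltr_pdivrMr // mul1r => /(_ xm); congr K.
by rewrite scaler0 addr0 [in Gmap _ x]xE Gmap_polar // !scalerA; congr (_ *: _); ring.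
Qed.

Lemma ray_K_lt_g nu (s : R) : enorm nu = 1 -> 0 <= s -> K (s *: nu) -> s < g nu.
Proof.
move=> nu1 s_ge0 Ks; have [M K_M] := K_bounded.
pose S := [set r : R | 0 <= r /\ K (r *: nu)].
have supS : has_sup S.
  split; first by exists s.
  by exists M => r [r_ge0 Kr]; have := K_M _ Kr; rewrite enormZ nu1 mulr1 ger0_norm.
pose rho := sup S; have s_rho : s <= rho by apply: sup_upper_bound.
have rho_notK : ~ K (rho *: nu).
  move=> Krho; have [e e_gt0 ball_rho] := K_open _ Krho.
  suff /(sup_upper_bound supS) : S (rho + e / 2).
    by rewrite -/rho gerDl leNgt divr_gt0.
  split; first by rewrite addr_ge0 ?(le_trans s_ge0 s_rho) // divr_ge0 ?ltW.
  apply: ball_rho; rewrite -scalerBl addrAC subrr add0r enormZ nu1 mulr1.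
  by rewrite gtr0_norm ?divr_gt0 // ltr_pdivrMr // ltr_pMr // ltr1n.
have rho_cl : eclosure K (rho *: nu).
  move=> e e_gt0; have [r Sr er] := sup_adherent e_gt0 supS.
  exists (r *: nu); first exact: Sr.2.
  rewrite -scalerBl enormZ nu1 mulr1.
  have r_rho : r <= rho by apply: sup_upper_bound.
  by rewrite ler0_norm ?subr_le0 // opprB ltrBlDr -ltrBlDl.
have rho_gt0 : 0 < rho.
  rewrite lt_neqAle (le_trans s_ge0 s_rho) andbT.
  by apply/eqP => rho0; apply: rho_notK; rewrite -rho0 scale0r.
have rho_notint : ~ einterior K (rho *: nu).
  by move=> [e e_gt0 ball_rho]; apply/rho_notK/ball_rho; rewrite subrr enorm0.
have [nu' nu'1 E] := (K_boundary _).1 (conj rho_cl rho_notint).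
have [rhoE nuE] := unit_scale_inj rho_gt0 (g_gt0 _ nu'1) nu1 nu'1 E.
rewrite nuE -rhoE lt_neqAle s_rho andbT.
by apply/eqP => srho; apply: rho_notK; rewrite -srho.
Qed.

Lemma Ymu_scaleE (m : R) : 0 < m -> forall w, Ymu g m w <-> K (m^-1 *: w).
Proof.
move=> m_gt0 w; split; first exact: Ymu_scale_K.
have [-> _|w0 Kk] := eqVneq w 0.
  by exists 0; rewrite ?/Gmap ?eqxx //= /oball0 /= enorm0.
have k0 : m^-1 *: w != 0 by rewrite scaler_eq0 negb_or invr_eq0 gt_eqF.
have [nu nu1 kE] := polar_decomp k0; set k := m^-1 *: w in k0 kE Kk.
have k_gt0 : 0 < enorm k by rewrite enorm_gt0.
have k_g : enorm k < g nu by apply: ray_K_lt_g; rewrite -?kE ?enorm_ge0.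
have g_gt0' : 0 < g nu by apply: lt_trans k_g.
exists ((m * enorm k / g nu) *: nu).
  rewrite /oball0 /= enormZ nu1 mulr1 gtr0_norm ?divr_gt0 ?mulr_gt0 //.
  by rewrite ltr_pdivrMr // ltr_pM2l.
rewrite Gmap_polar ?divr_gt0 ?mulr_gt0 // mulrC divfK ?gt_eqF // -scalerA -kE.
by rewrite /k scalerA mulfV ?gt_eqF // scale1r.
Qed.

Lemma Ymu_convex {m : R} : 0 < m -> econvex (Ymu g m).
Proof.
move=> m_gt0 x y t /(Ymu_scaleE _ m_gt0) Kx /(Ymu_scaleE _ m_gt0) Ky t0 t1.
apply/(Ymu_scaleE _ m_gt0); rewrite scalerDr !scalerA !(mulrC m^-1) -!scalerA.
exact: K_convex.
Qed.

End StarShaped.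

Theorem proposition2p3 (R : realType) (q : nat) (K : set 'rV[R]_q)
  (g : 'rV[R]_q -> R) (r0 mu0 mu : R) (v : 'rV[R]_q) :
  eopen K -> ebounded K -> econvex K -> K 0 ->
  (forall nu, sphere nu -> 0 < g nu) ->
  (exists L : R, forall nu nu', sphere nu -> sphere nu' ->
       `|g nu - g nu'| <= L * enorm (nu - nu')) ->
  (forall x, eboundary K x <-> exists2 nu, sphere nu & x = g nu *: nu) ->
  0 < r0 -> 0 < mu0 -> mu0 < 1 ->
  cball0 r0 `<=` Ymu g mu0 ->
  mu0 < mu -> mu < 1 ->
  K v -> ~ Ymu g mu v ->
  cone_plus r0 v `&` K `<=` K `\` Ymu g mu.
Proof.
move=> K_open K_bounded K_convex K0 g_gt0 _ K_boundary r0_gt0 mu0_gt0 _ ball_Y0.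
move=> mu0_mu _ _ vY.
move=> w [wC Kw]; split=> // wY.
have mu_gt0 : 0 < mu by apply: lt_trans mu0_mu.
have Y0_Y := Ymu_mono g (ltW mu0_mu).
have r0_v : r0 < enorm v.
  by rewrite ltNge; apply/negP => v_r0; apply/vY/Y0_Y/ball_Y0.
have wv : w != v by apply: contra_notN vY => /eqP <-.
have [t t_ge0 b_r0] := cone_plus_foot r0_gt0 r0_v wv wC.
set b := v - t *: (w - v) in b_r0.
have t1_gt0 : 0 < 1 + t by rewrite ltr_wpDr.
have vE : v = (t / (1 + t)) *: w + (1 - t / (1 + t)) *: b.
  have -> : 1 - t / (1 + t) = (1 + t)^-1 by field; rewrite gt_eqF.
  rewrite /b scalerBr scalerA mulrC scalerBr opprB addrCA [X in _ + (_ + X)]addrC.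
  rewrite addNKr -scalerDl -[X in X = _]scale1r; congr (_ *: _).
  by field; rewrite gt_eqF.
apply: vY; rewrite vE.
apply: (Ymu_convex K_open K_bounded K_convex K0 g_gt0 K_boundary mu_gt0 w b) => //.
- exact/Y0_Y/ball_Y0.
- by rewrite divr_ge0 // ltW.
- by rewrite ler_pdivrMr // mul1r lerDr.
Qed.
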